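(* Let $X$ be a finite alphabet and let $w \in \overline{X}^*$ be a word representing the identity in the free group $F(X)$. Then the following are equivalent: (i) $w$ represents the identity in the polycyclic monoid $P(X)$; (ii) every prefix of $w$ represents a positive element or the identity of $F(X)$; (iii) the only minimum of $w$ is the identity of $F(X)$.
   Context: $\overline{X} = \{x, x^{-1} : x \in X\}$; letters of $X$ are positive generators and letters $x^{-1}$ negative generators. $F(X)$ is the free group with presentation $\langle \overline{X} \mid xx^{-1} = x^{-1}x = 1 \ (x \in X)\rangle$. The polycyclic monoid $P(X)$ is the monoid of partial functions on $X^*$ (composed left to right: $fg$ means apply $f$ then $g$) generated by $x: u \mapsto ux$ (defined everywhere) and $x^{-1}: ux \mapsto u$ (defined on $X^*x$), $x \in X$; a word over $\overline{X}$ represents the identity of $P(X)$ exactly when it can be reduced to the empty word by successively deleting factors $xx^{-1}$ with $x \in X$. An element of $F(X)$ is positive if it is a product of one or more positive generators. For $w \in \overline{X}^*$ and $g \in F(X)$, $g$ is a minimum of $w$ if (a) some prefix of $w$ represents $g$, and (b) no prefix of $w$ representing $g$ is immediately followed (in $w$) by a negative generator. *)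

From mathcomp Require Import all_boot.
From Stdlib Require Import Relations.
Set Implicit Arguments. Unset Strict Implicit. Unset Printing Implicit Defensive.

(* A letter of \overline{X}: (x, true) is the positive generator x,
   (x, false) is the negative generator x^{-1}. *)
Definition letter (X : finType) := (X * bool)%type.
Definition linv (X : finType) (a : letter X) : letter X := (a.1, ~~ a.2).

(* Free group F(X) = < \overline{X} | x x^-1 = x^-1 x = 1 >:
   the congruence on words generated by deleting a factor a a^{-1}. *)
Inductive fg_step (X : finType) : seq (letter X) -> seq (letter X) -> Prop :=
| fg_del (u v : seq (letter X)) (a : letter X) :
    fg_step (u ++ a :: linv a :: v) (u ++ v).

Definition fg_eq (X : finType) : relation (seq (letter X)) :=
  clos_refl_sym_trans _ (@fg_step X).

Definition fg_positive (X : finType) (g : seq (letter X)) : Prop :=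
  exists p : seq (letter X), 0 < size p /\ all (fun a => a.2) p /\ fg_eq p g.

(* Polycyclic monoid P(X): partial functions on X^*, composed left to right.
   x : u |-> u x ;  x^{-1} : u x |-> u (undefined otherwise). *)
Definition pc_letter (X : finType) (a : letter X) (ou : option (seq X))
  : option (seq X) :=
  match ou with
  | None => None
  | Some u =>
      if a.2 then Some (rcons u a.1)
      else match lastP u with
           | LastNil => None
           | LastRcons u' y => if y == a.1 then Some u' else None
           end
  end.

Definition pc_act (X : finType) (w : seq (letter X)) (ou : option (seq X)) :=
  foldl (fun o a => pc_letter a o) ou w.

Definition pc_identity (X : finType) (w : seq (letter X)) : Prop :=
  forall u : seq X, pc_act w (Some u) = Some u.

(* g (given by a representing word) is a minimum of w. Prefixes of w are
   take n w, n <= size w; the prefix take n w is immediately followed by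
   the letter ohead (drop n w). *)
Definition is_minimum (X : finType) (w g : seq (letter X)) : Prop :=
  (exists n, n <= size w /\ fg_eq (take n w) g) /\
  (forall n, n <= size w -> fg_eq (take n w) g ->
     forall a, ohead (drop n w) = Some a -> a.2 = true).

From mathcomp Require Import all_boot zify.
From Stdlib Require Import Relations.
Set Implicit Arguments. Unset Strict Implicit. Unset Printing Implicit Defensive.

(* Free reduction is computed by a stack: each letter is pushed, or cancels
   the letter on top.  A prefix represents a positive element or the identity
   exactly when its stack holds only positive letters.
   (i) <-> (ii): while every stack is positive, a prefix maps [u] to [u]
   followed by the stack read bottom-up; conversely the partial function of
   a prefix is defined at the empty word only if its stack is positive.
   (ii) -> (iii): the bottom part [G] of a stack can only disappear when a
   negative letter is read while the stack is exactly [G]; as the final stack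
   is empty, no nonempty prefix value is a minimum.
   (iii) -> (ii): if some stack holds a negative letter [b], the part [G] from
   [b] down is never cancelled by a negative letter, and among the prefixes
   whose stack ends with [G] one of least exponent sum is a minimum other
   than the identity. *)

Section FreeReduction.
Variable X : finType.
Implicit Types (a b : letter X) (s p q u v w : seq (letter X)).

Definition push s a :=
  if s is b :: s' then if b == linv a then s' else a :: s else [:: a].

(* [red w] is the free reduction of [w] kept as a stack: its head is the
   last surviving letter of [w], i.e. [rev (red w)] is the reduced word. *)
Definition red w := foldl push [::] w.

Definition reduced s := sorted (fun b c => b != linv c) s.

Lemma linvK : involutive (@linv X).
Proof. by case=> x e; rewrite /linv /= negbK. Qed.

Lemma eq_linv a b : (a == linv b) = (b == linv a).
Proof. by apply/eqP/eqP => ->; rewrite linvK. Qed.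

Variant push_spec s a : seq (letter X) -> Type :=
  | PushCons of ohead s != Some (linv a) : push_spec s a (a :: s)
  | PushCancel s' of s = linv a :: s' : push_spec s a s'.

Lemma pushP s a : push_spec s a (push s a).
Proof.
case: s => [|b s] /=; first by constructor.
case: eqP => [->|ne_b]; first exact: PushCancel.
by constructor; apply/eqP => -[].
Qed.

Lemma push_pos s a : a.2 -> all snd s -> push s a = a :: s.
Proof. by case: pushP => // s' -> pos_a /andP[]; rewrite /= pos_a. Qed.

Lemma reduced_push s a : reduced s -> reduced (push s a).
Proof.
case: s => [|b s] //=; case: ifP => [_ /path_sorted //|ne_b].
by rewrite /reduced /= eq_linv ne_b.
Qed.

Lemma push_linvK s a : reduced s -> push (push s a) (linv a) = s.
Proof.
case: (pushP s a) => [_|s' ->] /=; first by rewrite linvK eqxx.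
case: s' => [|c s'] //=.
by rewrite linvK (inj_eq (can_inj linvK)) eq_sym => /andP[/negbTE -> _].
Qed.

Lemma red_rcons p a : red (rcons p a) = push (red p) a.
Proof. by rewrite /red foldl_rcons. Qed.

Lemma reduced_red p : reduced (red p).
Proof. by elim/last_ind: p => [|p a IHp] //; rewrite red_rcons reduced_push. Qed.

Lemma red_fg_step u v : fg_step u v -> red u = red v.
Proof.
by case=> {}u {}v a; rewrite /red !foldl_cat /= push_linvK ?reduced_red.
Qed.

Lemma fg_eq_rev_foldl s p : fg_eq (rev s ++ p) (rev (foldl push s p)).
Proof.
elim: p s => [|a p IHp] s /=; first by rewrite cats0; apply: rst_refl.
apply: rst_trans (IHp _); case: pushP => [_|s' ->].
  by rewrite rev_cons cat_rcons; apply: rst_refl.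
by apply: rst_step; rewrite rev_cons cat_rcons -{2}(linvK a); apply: fg_del.
Qed.

Lemma fg_eq_rev_red p : fg_eq p (rev (red p)).
Proof. exact: fg_eq_rev_foldl [::] p. Qed.

Lemma fg_eqE u v : fg_eq u v <-> red u = red v.
Proof.
split=> [|eq_red]; first by elim=> // [? ? /red_fg_step|? ? ? _ -> _ ->].
by apply: rst_trans (fg_eq_rev_red u) _; rewrite eq_red; apply/rst_sym/fg_eq_rev_red.
Qed.

Lemma red_rev_red p : red (rev (red p)) = red p.
Proof. by apply/fg_eqE/rst_sym/fg_eq_rev_red. Qed.

Lemma size_red p : size (red p) <= size p.
Proof.
elim/last_ind: p => [|p a IHp] //; rewrite red_rcons size_rcons.
case: pushP => [_|s' Ep] /=; first by rewrite ltnS.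
by rewrite Ep /= in IHp; apply/leqW/ltnW.
Qed.

Lemma red_pos p : all snd p -> red p = rev p.
Proof.
elim/last_ind: p => [|p a IHp] //; rewrite all_rcons red_rcons rev_rcons.
by case/andP=> pos_a pos_p; rewrite IHp // push_pos ?all_rev.
Qed.

Lemma positive_or_nil_red p : fg_positive p \/ fg_eq p [::] <-> all snd (red p).
Proof.
split=> [[[q [_ [pos_q /fg_eqE <-]]]|/fg_eqE ->]|pos_p].
- by rewrite red_pos ?all_rev.
- by [].
case E: (red p) (fg_eq_rev_red p) => [|b s] eq_p; [by right | left].
exists (rev (b :: s)); split; first by rewrite size_rev.
by split; [rewrite all_rev -E | exact: rst_sym].
Qed.

Definition pos_prefixes w := forall n, n <= size w -> all snd (red (take n w)).

End FreeReduction.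

Lemma ohead_drop_take (T : Type) (w : seq T) n a :
  ohead (drop n w) = Some a -> n < size w /\ take n.+1 w = rcons (take n w) a.
Proof.
move=> Ea; have lt_n : n < size w by rewrite -subn_gt0 -size_drop; case: drop Ea.
by move: Ea; rewrite (drop_nth a lt_n) (take_nth a lt_n) => -[->].
Qed.

Lemma ohead_drop_lt (T : Type) (w : seq T) n :
  n < size w -> exists a, ohead (drop n w) = Some a.
Proof. by case: w => // b w' lt_n; exists (nth b (b :: w') n); rewrite (drop_nth b lt_n). Qed.

Section Polycyclic.
Variable X : finType.
Implicit Types (a : letter X) (p q w : seq (letter X)) (u v : seq X).

Lemma pc_act_rcons p a o : pc_act (rcons p a) o = pc_letter a (pc_act p o).
Proof. by rewrite /pc_act foldl_rcons. Qed.

Lemma pc_act_cat p q o : pc_act (p ++ q) o = pc_act q (pc_act p o).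
Proof. by rewrite /pc_act foldl_cat. Qed.

Lemma pc_act_None p : pc_act p None = None.
Proof. by elim: p. Qed.

Lemma pc_letter_neg_nil (x : X) : pc_letter (x, false) (Some [::]) = None.
Proof.
rewrite /pc_letter /=; move E: [::] => s; case: lastP E => // u y.
by move/(congr1 size); rewrite size_rcons.
Qed.

Lemma pc_letter_neg_rcons u y x :
  pc_letter (x, false) (Some (rcons u y)) = if y == x then Some u else None.
Proof.
rewrite /pc_letter /=; move E: (rcons u y) => s; case: lastP E => [|u' y'].
  by move/(congr1 size); rewrite size_rcons.
by move/rcons_inj => [-> ->].
Qed.

Lemma all_snd_pos_word v : all snd [seq (x, true) | x <- v].
Proof. by elim: v. Qed.

Lemma red_pc_act p v :
  pc_act p (Some [::]) = Some v -> red p = rev [seq (x, true) | x <- v].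
Proof.
elim/last_ind: p v => [|p [x []] IHp] v; first by case=> <-.
all: rewrite pc_act_rcons red_rcons; case: (pc_act p _) IHp => // v' /(_ v' erefl) ->.
  by case=> <-; rewrite map_rcons rev_rcons push_pos // all_rev all_snd_pos_word.
case: (lastP v') => [|v'' y]; first by rewrite pc_letter_neg_nil.
rewrite pc_letter_neg_rcons; case: eqP => // -> [<-].
by rewrite map_rcons rev_rcons /= eqxx.
Qed.

Lemma pc_act_pos_prefixes p u : pos_prefixes p ->
  pc_act p (Some u) = Some (u ++ map fst (rev (red p))).
Proof.
elim/last_ind: p => [|p a IHp] pos_pa; first by rewrite cats0.
have pos_p : pos_prefixes p.
  move=> n le_n; rewrite -(takel_cat [:: a] le_n) cats1.
  by apply: pos_pa; rewrite size_rcons leqW.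
have := pos_pa _ (leqnn _); rewrite take_size pc_act_rcons red_rcons IHp //.
case: a {pos_pa} => x [] pos_push.
  have pos_red_p : all snd (red p) by rewrite -[p]take_size; apply: pos_p.
  by rewrite push_pos //= rev_cons map_rcons rcons_cat.
case: pushP pos_push => [_ /= //|s' Ep _].
by rewrite Ep rev_cons map_rcons -rcons_cat pc_letter_neg_rcons eqxx.
Qed.

Lemma pc_identityE w : red w = [::] -> pc_identity w <-> pos_prefixes w.
Proof.
move=> red_w; split=> [id_w n le_n|/pc_act_pos_prefixes act_w u]; last first.
  by rewrite act_w red_w cats0.
case E: (pc_act (take n w) (Some [::])) => [v|].
  by rewrite (red_pc_act E) all_rev all_snd_pos_word.
by have := id_w [::]; rewrite -(cat_take_drop n w) pc_act_cat E pc_act_None.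
Qed.

End Polycyclic.

Section Minimum.
Variable X : finType.
Implicit Types (a : letter X) (p s G w g : seq (letter X)).

Lemma suffix_push G s a :
  suffix G s -> (s = G -> ohead G != Some (linv a)) -> suffix G (push s a).
Proof.
case: pushP => [_ sGs _|s' ->]; first exact: suffix_trans sGs (suffix_cons _ _).
case/suffixP=> -[|c t] /= Es ne_head; last by case: Es => _ ->; apply: suffix_suffix.
by move: (ne_head Es); rewrite -Es eqxx.
Qed.

Lemma pos_prefixes_is_minimum_nil w : pos_prefixes w -> is_minimum w [::].
Proof.
move=> pos_w; split; first by exists 0; split; rewrite ?take0; last exact: rst_refl.
move=> n _ /fg_eqE red_n [x []] // Ea; have [lt_n take_n1] := ohead_drop_take Ea.
by have := pos_w _ lt_n; rewrite take_n1 red_rcons red_n.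
Qed.

Lemma pos_prefixes_minimum_nil w g :
  red w = [::] -> pos_prefixes w -> is_minimum w g -> fg_eq g [::].
Proof.
move=> red_w pos_w [[n [le_n /fg_eqE red_g]] min_g]; apply/fg_eqE.
have persist d : n + d <= size w -> suffix (red (take n w)) (red (take (n + d) w)).
  elim: d => [|d IHd] le_nd; first by rewrite addn0 suffix_refl.
  have lt_nd : n + d < size w by rewrite -addnS.
  have [a Ea] := ohead_drop_lt lt_nd; have [_ take_nd1] := ohead_drop_take Ea.
  rewrite addnS take_nd1 red_rcons; apply: suffix_push (IHd (ltnW lt_nd)) _ => red_nd.
  have eq_g : fg_eq (take (n + d) w) g by apply/fg_eqE; rewrite red_nd.
  have pos_a := min_g _ (ltnW lt_nd) eq_g a Ea.
  case: (red (take n w)) (pos_w n le_n) => [|b s] //= /andP[pos_b _].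
  by apply: contraTneq pos_b => -[->]; rewrite /= pos_a.
move: (persist (size w - n)); rewrite subnKC // take_size red_w suffixs0 red_g.
by move=> /(_ (leqnn _)) /eqP.
Qed.

(* The exponent sum of [s], shifted by [N] to stay in [nat]: the subtraction
   does not truncate as long as [s] has at most [N] negative letters. *)
Definition weight N s := count snd s + (N - count (predC snd) s).

Lemma weight_push_neg N s a : ~~ a.2 -> count (predC snd) (push s a) <= N ->
  weight N (push s a) < weight N s.
Proof.
rewrite /weight; case: a => x [] //= _; case: pushP => [_|s' ->] /=; lia.
Qed.

Lemma count_neg_red p : count (predC snd) (red p) <= size p.
Proof. exact: leq_trans (count_size _ _) (size_red p). Qed.

Lemma least_weight_minimum w G t :
  (forall a, ~~ a.2 -> ohead G != Some (linv a)) ->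
  t <= size w -> suffix G (red (take t w)) ->
  (forall n, n <= size w -> suffix G (red (take n w)) ->
     weight (size w) (red (take t w)) <= weight (size w) (red (take n w))) ->
  is_minimum w (rev (red (take t w))).
Proof.
move=> keep_G le_t G_t min_t.
split; first by exists t; split=> //; apply/fg_eqE; rewrite red_rev_red.
move=> n le_n /fg_eqE; rewrite red_rev_red => red_n a Ea.
have [lt_n take_n1] := ohead_drop_take Ea.
apply: contraT => neg_a.
have bound : count (predC snd) (red (take n.+1 w)) <= size w.
  by apply: leq_trans (count_neg_red _) _; rewrite size_take_min geq_minr.
have G_n1 : suffix G (red (take n.+1 w)).
  by rewrite take_n1 red_rcons red_n; apply: suffix_push G_t _ => _; apply: keep_G.
have := min_t _ lt_n G_n1; rewrite take_n1 red_rcons red_n in bound *.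
by rewrite leqNgt weight_push_neg.
Qed.

Lemma minimum_nil_pos_prefixes w :
  (forall g, is_minimum w g -> fg_eq g [::]) -> pos_prefixes w.
Proof.
move=> min_nil t0 le_t0; apply/negPn/negP; rewrite -has_predC => /hasP[b b_in neg_b].
set G := drop (index b (red (take t0 w))) (red (take t0 w)).
have G_head : ohead G = Some b by rewrite /G drop_index.
have keep_G a : ~~ a.2 -> ohead G != Some (linv a).
  by move=> neg_a; rewrite G_head; apply: contraNneq neg_b => -[->].
pose S := [pred t : 'I_(size w).+1 | suffix G (red (take t w))].
pose F (t : 'I_(size w).+1) := weight (size w) (red (take t w)).
have lt_t0 : t0 < (size w).+1 by rewrite ltnS.
have S_t0 : S (Ordinal lt_t0) by apply: suffix_drop.
case: (arg_minnP F S_t0) => t S_t min_t.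
have /min_nil/fg_eqE : is_minimum w (rev (red (take t w))).
  apply: least_weight_minimum keep_G _ S_t _; first by rewrite -ltnS.
  move=> n le_n G_n; have lt_n : n < (size w).+1 by rewrite ltnS.
  exact: (min_t (Ordinal lt_n)).
rewrite red_rev_red => red_t.
by move: S_t; rewrite inE red_t suffixs0 => /eqP G0; rewrite G0 in G_head.
Qed.

End Minimum.

Theorem proposition4p8 (X : finType) (w : seq (letter X)) :
  fg_eq w [::] ->
  (pc_identity w <->
   (forall n, n <= size w -> fg_positive (take n w) \/ fg_eq (take n w) [::]))
  /\
  ((forall n, n <= size w -> fg_positive (take n w) \/ fg_eq (take n w) [::]) <->
   (is_minimum w [::] /\ (forall g, is_minimum w g -> fg_eq g [::]))).
Proof.
move=> /fg_eqE red_w.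
have -> : (forall n, n <= size w -> fg_positive (take n w) \/ fg_eq (take n w) [::])
          <-> pos_prefixes w.
  by split=> pos_w n /pos_w /positive_or_nil_red.
split; first exact: pc_identityE.
split=> [pos_w | [_ min_nil]]; last exact: minimum_nil_pos_prefixes.
split; first exact: pos_prefixes_is_minimum_nil.
by move=> g; apply: pos_prefixes_minimum_nil.
Qed.
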